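(* Let $\Omega$, $\mu$, $w$, $\alpha$ and $T_{\alpha,w,\infty}$ be as in the context, and let $F\subseteq\Omega$ be a Borel set with $0<\mu(F)<\infty$. Suppose there is $N>0$ such that $\alpha^n(F)\cap F=\varnothing$ for all $n\geq N$ and $$\beta:=\inf\Big\{\prod_{k=1}^n(w\circ\alpha^{-k})(t):\ n\geq N,\ t\in F\Big\}\neq0.$$ Then the set $$\{f\in L^\infty(\Omega,\mu):\ \|T^n_{\alpha,w,\infty}f-\chi_F\|_\infty\geq1\ \text{ for all } n\geq N\}$$ is not $\sigma$-porous in $L^\infty(\Omega,\mu)$.
   Context: $\Omega$ is a locally compact Hausdorff space with a nonnegative Radon measure $\mu$; $w:\Omega\to(0,\infty)$ is a bounded measurable function; $\alpha:\Omega\to\Omega$ is a bijective bi-measurable map such that $\|f\circ\alpha\|_\infty=\|f\circ\alpha^{-1}\|_\infty=\|f\|_\infty$ for all $f\in L^\infty(\Omega,\mu)$. Here $\alpha^{-1}$ is the inverse map, $\alpha^{-k}:=(\alpha^{-1})^k$, $\alpha^k$ is the $k$-fold iterate. $T_{\alpha,w,\infty}:L^\infty(\Omega,\mu)\to L^\infty(\Omega,\mu)$ is $T_{\alpha,w,\infty}f:=w\cdot(f\circ\alpha)$. Porosity: Let $X$ be a metric space and $0<\lambda<1$. A set $E\subseteq X$ is $\lambda$-porous at $x\in E$ if for each $\delta>0$ there is $y\in B(x;\delta)\setminus\{x\}$ with $B(y;\lambda\, d(x,y))\cap E=\varnothing$; $E$ is $\lambda$-porous if it is $\lambda$-porous at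 each of its points; $E$ is $\sigma$-$\lambda$-porous if it is a countable union of $\lambda$-porous subsets of $X$. A set is called $\sigma$-porous if it is $\sigma$-$\lambda$-porous for some $\lambda\in(0,1)$; ''not $\sigma$-porous'' means not $\sigma$-$\lambda$-porous for any $\lambda\in(0,1)$. *)

From HB Require Import structures.
From mathcomp Require Import all_boot all_order all_algebra.
From mathcomp Require Import all_classical all_reals all_analysis.
From mathcomp Require Import ess_sup_inf.
Set Implicit Arguments. Unset Strict Implicit. Unset Printing Implicit Defensive.
Import Order.TTheory GRing.Theory Num.Theory Num.Def.
Import numFieldNormedType.Exports.
Local Open Scope classical_set_scope.
Local Open Scope ring_scope.

Notation borelT T := (g_sigma_algebraType (@open T)).

Definition radon_measure (T : ptopologicalType) (R : realType)
  (mu : {measure set (borelT T) -> \bar R}) : Prop :=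
  [/\ (forall K : set T, compact K -> (mu K < +oo)%E),
      (forall E : set (borelT T), measurable E ->
          mu E = ereal_inf [set mu U | U in [set U : set T | open U /\ E `<=` U]]) &
      (forall U : set T, open U ->
          mu U = ereal_sup [set mu K | K in [set K : set T | compact K /\ K `<=` U]])].

Section Linf.
Variables (T : ptopologicalType) (R : realType).
Variable mu : {measure set (borelT T) -> \bar R}.

Definition Linf_norm (f : borelT T -> R) : \bar R := ess_sup mu (EFin \o (normr \o f)).

(* L^oo(Omega, mu): measurable essentially bounded real functions
   (represented by functions; L^oo is their quotient by a.e. equality). *)
Definition Linf : set (borelT T -> R) :=
  [set f | measurable_fun setT f /\ (Linf_norm f < +oo)%E].

Definition Linf_dist (f g : borelT T -> R) : \bar R := Linf_norm (f \- g).
End Linf.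

Definition wcomp (T : Type) (R : pzRingType) (alpha : T -> T) (w : T -> R)
  (f : T -> R) : T -> R := fun x => w x * f (alpha x).

(* Points at distance 0 are identified (they are the same element of the
   metric quotient), so "y <> x" reads "0 < d x y". *)
Section Porosity.
Variables (V : Type) (R : realType) (X : set V) (d : V -> V -> \bar R).

Definition porous_at (lam : R) (E : set V) (x : V) : Prop :=
  forall delta : R, 0 < delta ->
    exists y, X y /\ (0 < d x y)%E /\ (d x y < delta%:E)%E /\
      (forall z, X z -> (d y z < lam%:E * d x y)%E -> ~ E z).

Definition lam_porous (lam : R) (E : set V) : Prop :=
  E `<=` X /\ forall x, E x -> porous_at lam E x.

Definition sigma_lam_porous (lam : R) (E : set V) : Prop :=
  exists Es : nat -> set V, (forall i, lam_porous lam (Es i)) /\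
    E = \bigcup_i Es i.

Definition sigma_porous (E : set V) : Prop :=
  exists lam : R, 0 < lam < 1 /\ sigma_lam_porous lam E.
End Porosity.

From HB Require Import structures.
From mathcomp Require Import all_boot all_order all_algebra.
From mathcomp Require Import all_classical all_reals all_analysis.
From mathcomp Require Import ess_sup_inf.
From mathcomp Require Import lra.
Set Implicit Arguments. Unset Strict Implicit. Unset Printing Implicit Defensive.
Import Order.TTheory GRing.Theory Num.Theory Num.Def.
Import numFieldNormedType.Exports.
Local Open Scope classical_set_scope.
Local Open Scope ring_scope.

(* Proof strategy.
   1. A Baire-type principle: in an (extended) metric space in which every
      sequence of shrinking nested closed balls has a point in common, no set
      containing an open ball is sigma-porous.  A lambda-porous set can be
      avoided by a closed sub-ball of at most half the radius of any given
      ball; iterating this along the countable family of porous pieces gives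
      nested balls whose common point lies in the given ball yet in no piece.
   2. L^oo(mu) with the distance Linf_dist satisfies these hypotheses: the
      distance is finite, vanishes on the diagonal, obeys the triangle
      inequality, and nested balls have a common point (completeness of L^oo,
      proved by taking pointwise limits off a null set).
   3. Let b > 0 be a lower bound of the products prod_{k=1}^n w(alpha^-k t),
      t in F, n >= N, and c = 1/b + 1.  If ||g - c chi_F||_oo < 1 and
      n >= N, then on F we have g > 1/b, hence on alpha^n(F), which misses F,
      |T^n g - chi_F| = |prod * g| o alpha^-n >= 1.  As alpha^-n preserves
      the L^oo norm and mu(F) > 0, this gives ||T^n g - chi_F||_oo >= 1, so
      the whole open unit ball around c chi_F lies in the set of the theorem,
      which is therefore not sigma-porous by 1 and 2. *)

Lemma halving_radii_small (R : realType) (r : nat -> R) :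
  (forall n, 0 < r n) -> (forall n, r n.+1 <= r n / 2) ->
  forall e, 0 < e -> exists i, r i < e.
Proof.
move=> r0 rhalf.
have r_mul n : r n * n.+1%:R <= r 0%N.
  elim: n => [|n IH]; first by rewrite mulr1.
  apply: le_trans IH; have -> : (n.+2%:R : R) = n.+1%:R + 1 by rewrite -addn1 natrD.
  have m_ge1 : (1 <= n.+1%:R :> R) by rewrite ler1n.
  have m1_ge0 : (0 <= n.+1%:R + 1 :> R) by lra.
  have := ler_wpM2r m1_ge0 (rhalf n); have := r0 n.+1.
  nra.
move=> e e0; exists (truncn (r 0%N / e)); set m := truncn _.
have lt_trunc : r 0%N < m.+1%:R * e by rewrite -ltr_pdivrMr //; exact: truncnS_gt.
have m_gt0 : (0 < m.+1%:R :> R) by rewrite ltr0n.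
by rewrite -(ltr_pM2r m_gt0) [e * _]mulrC; exact: le_lt_trans (r_mul m) lt_trunc.
Qed.

Lemma cauchy_lim_bound (R : realType) (u r : nat -> R) :
  (forall e, 0 < e -> exists i, r i < e) ->
  (forall i j, (i <= j)%N -> `|u i - u j| <= r i) ->
  cvgn u /\ forall i, `|u i - limn u| <= r i.
Proof.
move=> r_small u_tail.
have u_cvg : cvgn u.
  apply/cauchy_cvgP/cauchy_exP => e e0; have [i ri] := r_small e e0.
  exists (u i), i => // n /= ni; rewrite -ball_normE /=.
  exact: le_lt_trans (u_tail i n ni) ri.
split => // i; rewrite ler_norml; apply/andP; split.
- rewrite lerBrDl -lerBrDr addrC; apply: limr_le => //.
  exists i => // n /= ni; have := u_tail i n ni; rewrite ler_norml.
  move=> /andP[h _]; lra.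
- rewrite lerBlDr -lerBlDl; apply: limr_ge => //.
  exists i => // n /= ni; have := u_tail i n ni; rewrite ler_norml.
  move=> /andP[_ h]; lra.
Qed.

Lemma ereal_inf_pos_lbound (R : realType) (S : set (\bar R)) :
  (forall y, S y -> (0 <= y)%E) -> ereal_inf S != 0%E ->
  exists2 b : R, 0 < b & forall y, S y -> (b%:E <= y)%E.
Proof.
move=> S_ge0; have inf_ge0 : (0 <= ereal_inf S)%E by apply/ereal_infP.
have inf_lb := @ereal_inf_lbound R S.
move: inf_ge0 inf_lb; case: (ereal_inf S) => [r| |] //.
- by rewrite lee_fin => r_ge0 r_lb r_neq0; exists r; rewrite // lt_def r_ge0 andbT.
- by move=> _ oo_lb _; exists 1 => // y Sy; exact: le_trans (leey _) (oo_lb y Sy).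
Qed.

Section PorousBaire.
Variables (V : Type) (R : realType) (X : set V) (d : V -> V -> \bar R).
Hypothesis dist_fin : forall x y, X x -> X y -> d x y = (fine (d x y))%:E.
Hypothesis dist_refl : forall x, X x -> d x x = 0%E.
Hypothesis dist_tri :
  forall x y z, X x -> X y -> X z -> (d x z <= d x y + d y z)%E.

Definition nested_balls_complete : Prop :=
  forall (c : nat -> V) (r : nat -> R), (forall i, X (c i)) ->
    (forall i, 0 < r i) -> (forall e, 0 < e -> exists i, r i < e) ->
    (forall i j, (i <= j)%N -> (d (c i) (c j) <= (r i)%:E)%E) ->
    exists f, X f /\ forall i, (d (c i) f <= (r i)%:E)%E.

(* Any ball B(c, r) contains a closed ball of radius at most r/2 that misses a
   given lambda-porous set: either the set stays away from B(c, r/2), or a hole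
   provided by porosity at one of its points near c is used. *)
Lemma porous_avoid {lam : R} {P : set V} {c : V} {r : R} :
  0 < lam -> lam_porous X d lam P -> X c -> 0 < r -> exists c' r', [/\ X c', 0 < r', r' <= r / 2,
    fine (d c c') + r' <= r &
    forall z, X z -> (d c' z <= r'%:E)%E -> ~ P z].
Proof.
move=> lam0 [PX P_porous] Xc r0.
have [[x [Px dcx]]|no_near] := pselect (exists x, P x /\ (d c x < (r/2)%:E)%E).
  have Xx := PX _ Px.
  move: dcx; rewrite (dist_fin Xc Xx) lte_fin => dcx.
  have room : 0 < r / 2 - fine (d c x) by rewrite subr_gt0.
  have [y [Xy [dxy0 [dxy hole]]]] := P_porous x Px _ room.
  move: dxy0 dxy hole; rewrite (dist_fin Xx Xy) !lte_fin => dxy0 dxy hole.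
  have tri := dist_tri Xc Xx Xy.
  rewrite (dist_fin Xc Xx) (dist_fin Xx Xy) (dist_fin Xc Xy) -EFinD lee_fin in tri.
  set r' := minr (lam * fine (d x y) / 2) (r / 2).
  have r'_half : r' <= r / 2 by rewrite ge_min lexx orbT.
  have r'_hole : r' < lam * fine (d x y).
    apply: (@le_lt_trans _ _ (lam * fine (d x y) / 2)); first by rewrite ge_min lexx.
    have : 0 < lam * fine (d x y) by rewrite mulr_gt0.
    lra.
  exists y, r'; split => //.
  - by rewrite lt_min !divr_gt0 ?mulr_gt0.
  - lra.
  move=> z Xz; rewrite (dist_fin Xy Xz) lee_fin => dyz.
  by apply: (hole z Xz); rewrite (dist_fin Xy Xz) lte_fin (le_lt_trans dyz).
exists c, (r / 4); split => //.
- by rewrite divr_gt0.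
- lra.
- rewrite dist_refl //=; lra.
move=> z Xz dcz Pz; apply: no_near; exists z; split => //.
by apply: le_lt_trans dcz _; rewrite lte_fin; lra.
Qed.

Lemma nested_balls_avoid {lam : R} {Es : nat -> set V} {c0 : V} {r0 : R} :
  0 < lam -> (forall i, lam_porous X d lam (Es i)) -> X c0 -> 0 < r0 ->
  exists (c : nat -> V) (r : nat -> R), [/\ c 0%N = c0, r 0%N = r0 &
    forall n, [/\ X (c n), 0 < r n, r n.+1 <= r n / 2,
      fine (d (c n) (c n.+1)) + r n.+1 <= r n &
      forall z, X z -> (d (c n.+1) z <= (r n.+1)%:E)%E -> ~ Es n z]].
Proof.
move=> lam0 Es_porous Xc0 r0_gt0.
have : forall p : nat * (V * R), exists q : V * R, X p.2.1 -> 0 < p.2.2 ->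
    [/\ X q.1, 0 < q.2, q.2 <= p.2.2 / 2, fine (d p.2.1 q.1) + q.2 <= p.2.2 &
     forall z, X z -> (d q.1 z <= q.2%:E)%E -> ~ Es p.1 z].
  move=> [i [c r]] /=.
  have [[Xc r_gt0]|not_ball] := pselect (X c /\ 0 < r); last first.
    by exists (c, r) => Xc r_gt0; exfalso; apply: not_ball.
  have [c' [r' step]] := porous_avoid lam0 (Es_porous i) Xc r_gt0.
  by exists (c', r').
move=> /choice[next next_spec].
pose s := fix s n := if n is m.+1 then next (m, s m) else (c0, r0).
have s_ball n : X (s n).1 /\ 0 < (s n).2.
  elim: n => [//|n [Xs s_gt0]].
  by have [] := next_spec (n, s n) Xs s_gt0.
exists (fun n => (s n).1), (fun n => (s n).2); split => // n.
have [Xs s_gt0] := s_ball n.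
by have [] := next_spec (n, s n) Xs s_gt0.
Qed.

Lemma nested_balls_dist (c : nat -> V) (r : nat -> R) :
  (forall n, X (c n)) -> (forall n, 0 < r n) ->
  (forall n, fine (d (c n) (c n.+1)) + r n.+1 <= r n) ->
  forall i j, (i <= j)%N -> (d (c i) (c j) <= (r i)%:E)%E.
Proof.
move=> Xc r_gt0 nested i j /subnKC <-.
have shift k : fine (d (c i) (c (i + k)%N)) + r (i + k)%N <= r i.
  elim: k => [|k IH]; first by rewrite addn0 dist_refl // add0r.
  have tri := dist_tri (Xc i) (Xc (i + k)%N) (Xc (i + k).+1).
  rewrite (dist_fin (Xc i) (Xc (i + k)%N)) (dist_fin (Xc (i + k)%N) (Xc _))
    (dist_fin (Xc i) (Xc (i + k).+1)) -EFinD lee_fin in tri.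
  by have := nested (i + k)%N; rewrite addnS; lra.
have := shift (j - i)%N; have := r_gt0 (i + (j - i))%N.
by rewrite (dist_fin (Xc i) (Xc _)) lee_fin; lra.
Qed.

Theorem ball_not_sigma_porous (E : set V) (x0 : V) (rho : R) :
  nested_balls_complete -> X x0 -> 0 < rho ->
  (forall z, X z -> (d x0 z < rho%:E)%E -> E z) -> ~ sigma_porous X d E.
Proof.
move=> complete Xx0 rho0 ball_in_E [lam [/andP[lam0 _] [Es [Es_porous E_cover]]]].
have rho2_gt0 : 0 < rho / 2 by rewrite divr_gt0.
have [c [r [c_0 r_0 balls]]] := nested_balls_avoid lam0 Es_porous Xx0 rho2_gt0.
have Xc n : X (c n) by have [] := balls n.
have r_gt0 n : 0 < r n by have [] := balls n.
have [f [Xf f_in]] : exists f, X f /\ forall i, (d (c i) f <= (r i)%:E)%E.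
  apply: complete => //.
    by apply: halving_radii_small => // n; have [] := balls n.
  by apply: nested_balls_dist => // n; have [] := balls n.
have : E f.
  apply: ball_in_E => //; rewrite -c_0; apply: le_lt_trans (f_in 0%N) _.
  by rewrite r_0 lte_fin; lra.
rewrite E_cover => -[i _ Ei].
by have [_ _ _ _ avoid] := balls i; apply: (avoid f Xf (f_in i.+1)).
Qed.

End PorousBaire.
Arguments nested_balls_complete {V R}.

Section LinfMetric.
Context (R : realType) (T : ptopologicalType) (mu : {measure set (borelT T) -> \bar R}).
Implicit Types f g h : borelT T -> R.

Lemma Linf_dist_tri f g h :
  (Linf_dist mu f h <= Linf_dist mu f g + Linf_dist mu g h)%E.
Proof.
rewrite /Linf_dist /Linf_norm.
have -> : f \- h = (f \- g) \+ (g \- h) by apply/funext => x /=; rewrite addrA subrK.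
exact: ess_sup_normD.
Qed.

Lemma Linf_norm_ge0 f : (0 < mu setT)%E -> (0 <= Linf_norm mu f)%E.
Proof. by move=> mu0; apply: ess_sup_ger => // t /=; rewrite lee_fin. Qed.

Lemma Linf_dist_le_norms f g :
  (Linf_dist mu f g <= Linf_norm mu f + Linf_norm mu g)%E.
Proof.
have -> : Linf_norm mu g = Linf_norm mu (\- g).
  by rewrite /Linf_norm; congr ess_sup; apply/funext => x /=; rewrite normrN.
exact: (ess_sup_normD mu f (\- g)).
Qed.

Lemma Linf_dist_fin f g : (0 < mu setT)%E -> Linf mu f -> Linf mu g ->
  Linf_dist mu f g = (fine (Linf_dist mu f g))%:E.
Proof.
move=> mu0 [_ f_fin] [_ g_fin]; rewrite fineK // ge0_fin_numE; last exact: Linf_norm_ge0.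
by apply: le_lt_trans (Linf_dist_le_norms f g) _; rewrite lte_add_pinfty.
Qed.

Lemma Linf_dist_refl f : (0 < mu setT)%E -> Linf_dist mu f f = 0%E.
Proof.
move=> mu0; rewrite /Linf_dist /Linf_norm.
have -> : normr \o (f \- f) = cst 0 by apply/funext => x /=; rewrite subrr normr0.
exact: ess_sup_cstr.
Qed.

(* Completeness of L^oo in the nested-ball form: off a common null set the
   centers form pointwise Cauchy sequences, and the pointwise limit (set to 0
   on the null set, to keep it measurable) is the common point. *)
Lemma Linf_nested_balls_complete : nested_balls_complete (Linf mu) (Linf_dist mu).
Proof.
move=> c r Lc r_gt0 r_small c_nested.
have [Nul [mNul Nul0 Nul_sub]] : \forall x \ae mu,
    forall i j, (i <= j)%N -> `|c i x - c j x| <= r i.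
  apply: ae_foralln => i; apply: ae_foralln => j.
  have [ij|ji] := leqP i j; last by apply: nearW => x.
  have /ess_supP := c_nested i j ij.
  by apply: filterS => x /= h _; rewrite -lee_fin.
have off_Nul x : ~ Nul x -> forall i j, (i <= j)%N -> `|c i x - c j x| <= r i.
  by move=> Nx; apply: contra_notP Nx => /Nul_sub.
pose g n := c n \* \1_(~` Nul).
have mg n : measurable_fun setT (g n).
  apply: measurable_realfun.measurable_funM; first exact: (Lc n).1.
  by apply: measurable_realfun.measurable_indic; exact: measurableC.
have gE x n : ~ Nul x -> g n x = c n x.
  by move=> Nx; rewrite /g /= indicE mem_set // mulr1.
have g_lim x : cvgn (g ^~ x) /\ (~ Nul x -> forall i, `|g i x - limn (g ^~ x)| <= r i).
  have [Nx|Nx] := pselect (Nul x).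
    have -> : g ^~ x = cst 0 by apply/funext => n; rewrite /g /= indicE memNset ?mulr0.
    by split => //; exact: is_cvg_cst.
  have g_tail i j : (i <= j)%N -> `|g i x - g j x| <= r i.
    by rewrite !gE //; exact: off_Nul.
  by have [g_cvg g_bd] := cauchy_lim_bound r_small g_tail.
pose f x := limn (g ^~ x).
have mf : measurable_fun setT f.
  by apply: (measurable_realfun.measurable_fun_cvg (h := g)) => // x _; exact: (g_lim x).1.
have f_in i : (Linf_dist mu (c i) f <= (r i)%:E)%E.
  apply/ess_supP; exists Nul; split => // x /= h; apply: contra_notP h => Nx.
  by rewrite lee_fin -(gE x i Nx); exact: (g_lim x).2.
exists f; split => //; split => //.
have -> : f = c 0%N \- (c 0%N \- f) by apply/funext => x /=; rewrite opprB addrC subrK.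
apply: le_lt_trans (Linf_dist_le_norms _ _) _.
rewrite lte_add_pinfty //; first exact: (Lc 0%N).2.
by apply: le_lt_trans (f_in 0%N) _; rewrite ltry.
Qed.

End LinfMetric.

Section Orbits.
Variables (U : Type) (alpha alphainv : U -> U).
Hypothesis alphaK : cancel alphainv alpha.

Lemma iter_cancel n t : iter n alpha (iter n alphainv t) = t.
Proof. by elim: n t => [//|n IH] t; rewrite iterSr /= alphaK IH. Qed.

Lemma iter_inv_notin (F : set U) n t :
  iter n alpha @` F `&` F = set0 -> F t -> ~ F (iter n alphainv t).
Proof.
move=> disj Ft Fi; suff : (iter n alpha @` F `&` F) t by rewrite disj.
by split => //; exists (iter n alphainv t) => //; exact: iter_cancel.
Qed.

Lemma iter_wcomp_orbit (R : comPzRingType) (w : U -> R) n g t :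
  iter n (wcomp alpha w) g (iter n alphainv t) =
  (\prod_(1 <= k < n.+1) w (iter k alphainv t)) * g t.
Proof.
elim: n g t => [|n IH] g t; first by rewrite big_geq // mul1r.
by rewrite big_nat_recr //= /wcomp alphaK IH mulrA [X in X * g t]mulrC.
Qed.

End Orbits.

Section WeightedComposition.
Context (R : realType) (T : ptopologicalType) (mu : {measure set (borelT T) -> \bar R}).
Variables (w : borelT T -> R) (alpha alphainv : borelT T -> borelT T).

Lemma iter_wcomp_measurable n g : measurable_fun setT w -> measurable_fun setT alpha ->
  measurable_fun setT g -> measurable_fun setT (iter n (wcomp alpha w) g).
Proof.
move=> mw malpha mg; elim: n => [//|n IH] /=.
by apply: measurable_realfun.measurable_funM => //; exact: measurableT_comp IH malpha.
Qed.

Lemma iter_inv_norm n h : measurable_fun setT alphainv ->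
  (forall f, Linf mu f -> Linf_norm mu (f \o alphainv) = Linf_norm mu f) ->
  Linf mu h -> Linf_norm mu (h \o iter n alphainv) = Linf_norm mu h.
Proof.
move=> malphainv norm_inv; elim: n h => [//|n IH] h Lh.
have Lh' : Linf mu (h \o alphainv).
  by split; [exact: measurableT_comp Lh.1 malphainv | rewrite norm_inv //; exact: Lh.2].
have -> : h \o iter n.+1 alphainv = (h \o alphainv) \o iter n alphainv by [].
by rewrite IH // norm_inv.
Qed.

End WeightedComposition.

(* The arithmetic core: a value within 1 of 1/b + 1 is larger than 1/b, so its
   product with a weight P >= b is at least 1. *)
Lemma escape_bound (R : realFieldType) (b P y : R) :
  0 < b -> b <= P -> `|(b^-1 + 1) - y| < 1 -> 1 <= `|P * y|.
Proof.
move=> b0 bP; rewrite ltr_norml => /andP[_ y_near].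
have binv0 : 0 < b^-1 by rewrite invr_gt0.
have yb : b^-1 <= y by lra.
rewrite ger0_norm; last by rewrite mulr_ge0 //; lra.
by rewrite -(mulfV (lt0r_neq0 b0)) ler_pM // ltW.
Qed.

Section UnitBall.
Variables (R : realType) (T : ptopologicalType) (mu : {measure set (borelT T) -> \bar R}).
Variables (w : borelT T -> R) (alpha alphainv : borelT T -> borelT T).
Variables (F : set (borelT T)) (N : nat) (b : R).
Hypotheses (mw : measurable_fun setT w) (alphaK : cancel alphainv alpha).
Hypotheses (malpha : measurable_fun setT alpha) (malphainv : measurable_fun setT alphainv).
Hypothesis norm_inv :
  forall f, Linf mu f -> Linf_norm mu (f \o alphainv) = Linf_norm mu f.
Hypotheses (mF : measurable F) (muF : (0 < mu F)%E).
Hypothesis disjF : forall n, (N <= n)%N -> iter n alpha @` F `&` F = set0.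
Hypotheses (b_gt0 : 0 < b)
  (b_lb : forall n t, (N <= n)%N -> F t -> b <= \prod_(1 <= k < n.+1) w (iter k alphainv t)).

Definition ball_center : borelT T -> R := fun x => (b^-1 + 1) * \1_F x.

Lemma Linf_ball_center : Linf mu ball_center.
Proof.
split; first exact: measurable_realfun.measurable_funM
  (measurable_cst _) (measurable_realfun.measurable_indic mF).
apply: (@le_lt_trans _ _ `|b^-1 + 1|%:E); last by rewrite ltry.
apply: ess_sup_ler => t /=; rewrite lee_fin normrM ler_piMr // indicE.
by case: (_ \in _); rewrite ?normr1 ?normr0.
Qed.

(* Every g in the open unit ball around ball_center satisfies
   ||T^n g - chi_F||_oo >= 1 for all n >= N: otherwise, transported back by
   alpha^-n, a.e. point of F would violate escape_bound, while mu F > 0. *)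
Lemma unit_ball_far_from_chiF g : Linf mu g ->
  (Linf_dist mu ball_center g < 1%:E)%E ->
  forall n, (N <= n)%N -> (1 <= Linf_dist mu (iter n (wcomp alpha w) g) \1_F)%E.
Proof.
move=> Lg near_center n Nn; rewrite /Linf_dist.
set h := iter n (wcomp alpha w) g \- \1_F.
have [->|h_fin] := eqVneq (Linf_norm mu h) +oo%E; first exact: leey.
have Lh : Linf mu h.
  split; last by rewrite ltNge leye_eq.
  apply: measurable_realfun.measurable_funB.
    exact: iter_wcomp_measurable Lg.1.
  exact: measurable_realfun.measurable_indic.
rewrite -(iter_inv_norm n malphainv norm_inv Lh) leNgt; apply/negP => h_small.
have h_orbit x : F x -> h (iter n alphainv x) =
    (\prod_(1 <= k < n.+1) w (iter k alphainv x)) * g x.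
  move=> Fx; rewrite /h /= iter_wcomp_orbit // indicE memNset ?subr0 //.
  exact: iter_inv_notin (disjF Nn) Fx.
have ae_notF : \forall x \ae mu, ~ F x.
  have h_ae := ess_sup_ge mu (EFin \o (normr \o (h \o iter n alphainv))).
  have /ess_supP g_ae := lexx (Linf_dist mu ball_center g).
  apply: filterS2 h_ae g_ae => x /= h_le g_le Fx.
  have := le_lt_trans h_le h_small; rewrite lte_fin h_orbit // ltNge.
  apply/negP/negPn/(escape_bound b_gt0 (b_lb Nn Fx)).
  by have := le_lt_trans g_le near_center; rewrite /ball_center indicE mem_set // mulr1.
have muF0 : mu F = 0%E.
  by apply: (measure_negligible mF); apply: negligibleS ae_notF => x Fx /=; apply.
by move: muF; rewrite muF0 ltxx.
Qed.

End UnitBall.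

Theorem theorem3p17 (R : realType) (T : ptopologicalType)
  (mu : {measure set (borelT T) -> \bar R})
  (w : borelT T -> R) (alpha alphainv : borelT T -> borelT T)
  (F : set (borelT T)) (N : nat) :
  hausdorff_space T ->
  locally_compact [set: T] ->
  radon_measure mu ->
  measurable_fun setT w ->
  (forall x, 0 < w x) ->
  (exists M : R, forall x, `|w x| <= M) ->
  cancel alpha alphainv -> cancel alphainv alpha ->
  measurable_fun setT alpha -> measurable_fun setT alphainv ->
  (forall f, Linf mu f ->
     Linf_norm mu (f \o alpha) = Linf_norm mu f /\
     Linf_norm mu (f \o alphainv) = Linf_norm mu f) ->
  measurable F ->
  (0 < mu F)%E -> (mu F < +oo)%E ->
  (0 < N)%N ->
  (forall n, (N <= n)%N -> iter n alpha @` F `&` F = set0) ->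
  ereal_inf [set y | exists n t, [/\ (N <= n)%N, F t &
      y = (\prod_(1 <= k < n.+1) w (iter k alphainv t))%:E]] != 0%E ->
  ~ sigma_porous (Linf mu) (Linf_dist mu)
      [set f | Linf mu f /\
         forall n, (N <= n)%N ->
           (1 <= Linf_dist mu (iter n (wcomp alpha w) f) (\1_F))%E].
Proof.
move=> _ _ _ mw w_gt0 _ _ alphaK malpha malphainv alpha_iso mF muF _ _ disjF beta_neq0.
have mu0 : (0 < mu setT)%E by apply: lt_le_trans muF (le_measure _ _ _ _); rewrite ?inE.
set S := (X in ereal_inf X) in beta_neq0.
have S_ge0 y : S y -> (0 <= y)%E.
  by move=> [n [t [_ _ ->]]]; rewrite lee_fin ltW // prodr_gt0.
have [b b_gt0 b_lbS] := ereal_inf_pos_lbound S_ge0 beta_neq0.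
have b_lb n t : (N <= n)%N -> F t -> b <= \prod_(1 <= k < n.+1) w (iter k alphainv t).
  by move=> Nn Ft; rewrite -lee_fin; apply: b_lbS; exists n, t.
apply: (ball_not_sigma_porous (fun f g => @Linf_dist_fin _ _ _ f g mu0)
  (fun f _ => Linf_dist_refl f mu0) (fun f g h _ _ _ => Linf_dist_tri mu f g h)
  (@Linf_nested_balls_complete _ _ mu) (Linf_ball_center mu b mF) ltr01).
move=> g Lg near_center.
split => //; apply: unit_ball_far_from_chiF Lg near_center => //.
by move=> f Lf; exact: (alpha_iso f Lf).2.
Qed.
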